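(* Let $(A,B)$ be a Katsura pair such that $A$ has no zero rows, and let $(\mathbb{Z}\times E_A^0,E_A)$ be the associated action-restriction pair. Then its contraction coefficient is $$\rho=\limsup_{n\to\infty}\left(\max_{\mu\in E_A^n}\frac{|B_\mu|}{A_\mu}\right)^{1/n}.$$
   Context: Katsura pair: $N\in\mathbb{N}$, $A\in M_N(\mathbb{N})$ (nonnegative integers), $B\in M_N(\mathbb{Z})$ with $A_{ij}=0\Rightarrow B_{ij}=0$. Graph $E_A$: vertices $\{1,\dots,N\}$, edges $e_{i,j,m}$ ($0\le m<A_{ij}$), $r=i$, $s=j$; $E_A^n$ paths $\mu_1\cdots\mu_n$ of length $n$ with $s(\mu_t)=r(\mu_{t+1})$. For $\mu=e_{i_0,i_1,r_1}\cdots e_{i_{n-1},i_n,r_n}$, $A_\mu=\prod_tA_{i_ti_{t+1}}$, $B_\mu=\prod_tB_{i_ti_{t+1}}$. The action-restriction pair $(\mathbb{Z}\times E_A^0,E_A)$: the group bundle with elements $a_i^k$ ($a_i^ka_i^l=a_i^{k+l}$, domain = codomain $=i$) acts by $a_i^k\cdot e_{i,j,m}=e_{i,j,\hat m}$, $a_i^k|_{e_{i,j,m}}=a_j^{\hat k}$, $kB_{ij}+m=\hat kA_{ij}+\hat m$, $0\le\hat m<A_{ij}$, extended to paths by $g\cdot(e\nu)=(g\cdot e)(g|_e\cdot\nu)$, $g|_{e\nu}=(g|_e)|_\nu$. Contraction coefficient: for a finitely generated groupoid $G$ with finite symmetric generating set $S$ and word length $\ell_S$, acting via an action-restriction pair on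 a finite graph $E$, $\rho=\limsup_{n\to\infty}\left(\limsup_{g\in G,\ \ell_S(g)\to\infty}\max_{\mu\in d(g)E^n}\frac{\ell_S(g|_\mu)}{\ell_S(g)}\right)^{1/n}$ (it does not depend on $S$). For $\mathbb{Z}\times E_A^0$ one may take $S=\{a_i^{\pm1}\}$, so $\ell_S(a_i^k)=|k|$, and $\rho=\limsup_n\left(\limsup_{m\to\infty}\max_{\mu\in E_A^n}\frac{\ell_S(a^m_{r(\mu)}|_\mu)}{m}\right)^{1/n}$. *)

From HB Require Import structures.
From mathcomp Require Import all_boot all_order all_algebra.
From mathcomp Require Import all_classical all_reals all_analysis.
Set Implicit Arguments. Unset Strict Implicit. Unset Printing Implicit Defensive.
Import Order.TTheory GRing.Theory Num.Theory.
Local Open Scope classical_set_scope.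
Local Open Scope ring_scope.

Section Katsura.
Variable N : nat.
Variable A : 'M[nat]_N.
Variable B : 'M[int]_N.

Definition katsura_pair : Prop := forall i j, A i j = 0%N -> B i j = 0.

Definition no_zero_rows : Prop := forall i : 'I_N, exists j : 'I_N, (0 < A i j)%N.

(* A path of E_A is given by its range vertex r(mu) = i_0 and the list of its
   edges after the start: the t-th step (i_{t+1}, m_{t+1}) represents the edge
   e_{i_t, i_{t+1}, m_{t+1}}.  The empty list is the vertex i_0 (length 0). *)
Fixpoint is_path (i : 'I_N) (s : seq ('I_N * nat)) : bool :=
  if s is (j, m) :: s' then (m < A i j)%N && is_path j s' else true.

Definition paths_from (n : nat) (i : 'I_N) : set (seq ('I_N * nat)) :=
  [set s | is_path i s /\ size s = n].

(* Restriction a_i^k |_{e_{i,j,m}} = a_j^{khat}, with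
   k B_ij + m = khat A_ij + mhat, 0 <= mhat < A_ij (Euclidean division). *)
Definition edge_restr (i j : 'I_N) (m : nat) (k : int) : int :=
  ((k * B i j + m%:Z) %/ (A i j)%:Z)%Z.

(* g|_{e nu} = (g|_e)|_nu : exponent of a_{r(mu)}^k |_mu. *)
Fixpoint path_restr (i : 'I_N) (k : int) (s : seq ('I_N * nat)) : int :=
  if s is (j, m) :: s' then path_restr j (edge_restr i j m k) s' else k.

(* Word length with respect to S = {a_i^{+-1}}:  l_S(a_i^k) = |k|. *)
Definition wlen (k : int) : nat := `|k|%N.

Variable R : realType.
Local Open Scope ereal_scope.

Definition max_ratio (n : nat) (i : 'I_N) (k : int) : \bar R :=
  ereal_sup [set ((wlen (path_restr i k s))%:R / (wlen k)%:R)%R%:E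
            | s in paths_from n i].

(* limsup_{g in G, l_S(g) -> oo} max_ratio n g
   = inf_K sup { max_ratio n g | l_S(g) >= K }. *)
Definition inner_limsup (n : nat) : \bar R :=
  ereal_inf [set ereal_sup [set max_ratio n g.1 g.2
                           | g in [set g : 'I_N * int | (K <= wlen g.2)%N]]
            | K in [set: nat]].

Definition contraction_coeff : \bar R :=
  limn_esup (fun n : nat => poweR (inner_limsup n) (n%:R^-1)%R).

Fixpoint A_path (i : 'I_N) (s : seq ('I_N * nat)) : nat :=
  if s is (j, _) :: s' then (A i j * A_path j s')%N else 1%N.
Fixpoint B_path (i : 'I_N) (s : seq ('I_N * nat)) : int :=
  if s is (j, _) :: s' then (B i j * B_path j s')%R else 1%R.

Definition max_BA (n : nat) : \bar R :=
  ereal_sup [set x : \bar R | exists (i : 'I_N) (s : seq ('I_N * nat)),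
     paths_from n i s /\ x = ((`|B_path i s|%:~R : R) / (A_path i s)%:R)%R%:E].

End Katsura.

From HB Require Import structures.
From mathcomp Require Import all_boot all_order all_algebra.
From mathcomp Require Import all_classical all_reals all_analysis.
From mathcomp Require Import zify ring.
Import Order.TTheory GRing.Theory Num.Theory.
Local Open Scope ring_scope.
Set Implicit Arguments. Unset Strict Implicit.

(* Euclidean division of k B_ij + m by A_ij approximates k B_ij / A_ij within 1.
   Along a path mu of length n these errors accumulate to at most
   sum_(t < n) b^t, with b the largest |B_ij|, uniformly in k; hence
   l(a^k|_mu) / |k| tends to |B_mu| / A_mu uniformly in mu as |k| grows, and
   the inner limsup at level n is exactly max_mu |B_mu| / A_mu. *)

Lemma dist_divzD_lt1 (R : realFieldType) (x m a : int) : 0 < a -> 0 <= m < a ->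
  `|((x + m) %/ a)%Z%:~R - x%:~R / a%:~R| < 1 :> R.
Proof.
move=> a_gt0 /andP[m_ge0 m_lta].
have a_neq0 : a != 0 by rewrite gt_eqF.
have int_err : `|((x + m) %/ a)%Z * a - x| < a.
  have := divz_eq (x + m) a; have := modz_ge0 (x + m) a_neq0.
  have := ltz_mod (x + m) a_neq0; rewrite gtr0_norm //.
  set q := ((_ %/ _)%Z); set r := ((_ %% _)%Z) => r_lta r_ge0 xmE.
  rewrite ltr_norml; apply/andP; split; lia.
have aR_gt0 : (0 : R) < a%:~R by rewrite ltr0z.
rewrite -[X in X - _](mulfK (lt0r_neq0 aR_gt0)) -mulrBl -intrM -intrB.
by rewrite normrM normfV (gtr0_norm aR_gt0) ltr_pdivrMr // mul1r -intr_norm ltr_int.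
Qed.

Lemma dist_normr_div_le (R : numFieldType) (p k r c : R) : k != 0 ->
  `|p - k * r| <= c -> `| `|p| / `|k| - `|r| | <= c / `|k|.
Proof.
move=> k_neq0 err; have k_gt0 : 0 < `|k| by rewrite normr_gt0.
have -> : `|p| / `|k| - `|r| = (`|p| - `|k * r|) / `|k|.
  by rewrite normrM; field; rewrite lt0r_neq0.
rewrite normrM normfV normr_id ler_pM2r ?invr_gt0 //.
exact: le_trans (ler_dist_dist _ _) err.
Qed.

Section KatsuraRestriction.
Variables (R : realType) (N : nat) (A : 'M[nat]_N) (B : 'M[int]_N).

Definition path_ratio i s : R := (B_path B i s)%:~R / (A_path A i s)%:R.

Definition restr_ratio i k s : R :=
  (wlen (path_restr A B i k s))%:R / (wlen k)%:R.

Definition max_absB : nat := \max_i \max_j `|B i j|%N.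

Lemma absz_le_max_absB i j : (`|B i j| <= max_absB)%N.
Proof.
apply: leq_trans (leq_bigmax (F := fun j => `|B i j|%N) j) _.
exact: (leq_bigmax (F := fun i => \max_j `|B i j|%N) i).
Qed.

Lemma A_path_gt0 i s : is_path A i s -> (0 < A_path A i s)%N.
Proof.
elim: s i => [|[j m] s IHs] i //= /andP[m_lt s_path].
by rewrite muln_gt0 (IHs _ s_path) andbT (leq_ltn_trans _ m_lt).
Qed.

Lemma path_ratio_cons i j m s :
  path_ratio i ((j, m) :: s) = (B i j)%:~R / (A i j)%:R * path_ratio j s.
Proof. by rewrite /path_ratio /= intrM natrM invfM mulrACA. Qed.

Lemma norm_path_ratio i s :
  `|path_ratio i s| = `|B_path B i s|%:~R / (A_path A i s)%:R.
Proof. by rewrite normrM normfV normr_nat -intr_norm. Qed.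

Lemma norm_path_ratio_le i s : is_path A i s ->
  `|path_ratio i s| <= (max_absB ^ size s)%:R.
Proof.
elim: s i => [|[j m] s IHs] i; first by rewrite /path_ratio /= divr1 normr1.
rewrite path_ratio_cons /= => /andP[m_lt s_path].
have Aij_ge1 : (1 <= A i j)%N by apply: leq_ltn_trans m_lt.
rewrite expnS natrM normrM; apply: ler_pM => //; last exact: IHs.
rewrite normrM normfV normr_nat -intr_norm -natr_absz ler_pdivrMr ?ltr0n //.
by rewrite -natrM ler_nat (leq_trans (absz_le_max_absB i j)) ?leq_pmulr.
Qed.

Lemma edge_restr_err i j m k : (m < A i j)%N ->
  `|(edge_restr A B i j m k)%:~R - k%:~R * ((B i j)%:~R / (A i j)%:R)| < 1 :> R.
Proof.
move=> m_lt; rewrite mulrA -intrM.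
by apply: dist_divzD_lt1; rewrite ?ltz_nat ?(leq_ltn_trans _ m_lt).
Qed.

Lemma path_restr_err i k s : is_path A i s ->
  `|(path_restr A B i k s)%:~R - k%:~R * path_ratio i s|
    <= (\sum_(t < size s) max_absB ^ t)%:R.
Proof.
elim: s i k => [|[j m] s IHs] i k.
  by rewrite /path_ratio big_ord0 /= divr1 mulr1 subrr normr0.
rewrite path_ratio_cons /= big_ord_recr natrD => /andP[m_lt s_path].
set q := edge_restr A B i j m k; set P := (path_restr A B j q s)%:~R.
have -> : P - k%:~R * ((B i j)%:~R / (A i j)%:R * path_ratio j s) =
    (P - q%:~R * path_ratio j s)
    + (q%:~R - k%:~R * ((B i j)%:~R / (A i j)%:R)) * path_ratio j s by ring.
apply: le_trans (ler_normD _ _) (lerD (IHs _ _ s_path) _).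
rewrite normrM -[X in _ <= X]mul1r.
apply: ler_pM => //; first exact/ltW/edge_restr_err.
exact: norm_path_ratio_le.
Qed.

Lemma restr_ratio_near n (e : R) : 0 < e -> exists K : nat,
  forall i s k, paths_from A n i s -> (K <= wlen k)%N ->
  `|restr_ratio i k s - `|path_ratio i s| | <= e.
Proof.
move=> e_gt0; set C : R := (\sum_(t < n) max_absB ^ t)%:R.
exists (Num.truncn (C / e)).+1 => i s k [s_path s_size] K_le.
have wlenE (x : int) : (wlen x)%:R = `|x%:~R : R|.
  by rewrite /wlen natr_absz intr_norm.
have k_neq0 : k != 0 by apply: contraTneq K_le => ->.
have k_gt0 : 0 < `|k%:~R : R| by rewrite normr_gt0 intr_eq0.
rewrite /restr_ratio !wlenE.
apply: le_trans (dist_normr_div_le _ (path_restr_err k s_path)) _.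
  by rewrite intr_eq0.
rewrite s_size ler_pdivrMr // mulrC -ler_pdivrMr //.
by apply/ltW/(lt_le_trans (truncnS_gt _)); rewrite -wlenE ler_nat.
Qed.

Local Open Scope ereal_scope.

Lemma inner_limsup_le_max_BA n : inner_limsup A B R n <= max_BA A B R n.
Proof.
apply/lee_addgt0Pr => e e_gt0; have [K near] := restr_ratio_near n e_gt0.
apply: ge_ereal_inf; eexists; first by exists K.
apply: ge_ereal_sup => _ [[i k] /= K_le <-].
apply: ge_ereal_sup => _ [s s_path <-].
apply: (@le_trans _ _ (`|path_ratio i s| + e)%:E).
  by move: (near i s k s_path K_le); rewrite lee_fin ler_distl => /andP[].
rewrite EFinD leeD2r //; apply: ereal_sup_ubound.
by exists i, s; rewrite norm_path_ratio.
Qed.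

Lemma max_BA_le_inner_limsup n : max_BA A B R n <= inner_limsup A B R n.
Proof.
apply: ge_ereal_sup => _ [i [s [s_path ->]]]; rewrite -norm_path_ratio.
apply/ereal_infP => _ [K _ <-]; apply/lee_addgt0Pr => e e_gt0.
have [K' near] := restr_ratio_near n e_gt0.
set k := Posz (K + K').
apply: (@le_trans _ _ (restr_ratio i k s + e)%:E).
  move: (near i s k s_path (leq_addl K K')).
  by rewrite lee_fin ler_distlC lerBlDr => /andP[].
rewrite EFinD leeD2r //; apply: (@le_trans _ _ (max_ratio A B R n i k)).
  by apply: ereal_sup_ubound; exists s.
by apply: ereal_sup_ubound; exists (i, k) => //; exact: leq_addr.
Qed.

Lemma inner_limsup_eq_max_BA n : inner_limsup A B R n = max_BA A B R n.
Proof.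
by apply/eqP; rewrite eq_le inner_limsup_le_max_BA max_BA_le_inner_limsup.
Qed.

End KatsuraRestriction.

Theorem proposition3p4 (R : realType) (N : nat) (A : 'M[nat]_N) (B : 'M[int]_N) :
  (0 < N)%N -> katsura_pair A B -> no_zero_rows A ->
  contraction_coeff A B R =
  limn_esup (fun n : nat => poweR (max_BA A B R n) (n%:R^-1)).
Proof.
move=> _ _ _; congr limn_esup; apply: funext => n.
by rewrite inner_limsup_eq_max_BA.
Qed.
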